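(* Let $N\ge1$, $R>0$, $m>1$, $p>1$, $\alpha,\beta\in\mathbb R$. Let $a:[0,\infty)\to(0,\infty)$ be continuous with $c_1\le a(t)\le c_2$ for all $t\ge 0$, for some constants $0<c_1\le c_2$, and let $g:[0,\infty)\to[0,\infty)$ be continuous. If $$\gamma>0,\qquad N+\beta>0,\qquad \beta-\alpha+m\le 0,$$ then the problem $$-\Big(\frac{r^{N+\alpha-1}|v'(r)|^{m-2}v'(r)}{(a(r)+g(v(r)))^\gamma}\Big)'=r^{N+\beta-1}v^p(r),\ 0<r<R,\qquad v'(0)=0,\ v(R)=0,$$ has no positive solutions.
   Context: A positive solution is a function $v$, positive on $[0,R)$, with $v\in C^1[0,R)\cap C[0,R]$, such that $r\mapsto r^{N+\alpha-1}|v'(r)|^{m-2}v'(r)\,[a(r)+g(v(r))]^{-\gamma}$ belongs to $C^1(0,R)$ and $v$ satisfies the displayed equation and boundary conditions. *)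

From Stdlib Require Import Reals.
From Coquelicot Require Import Coquelicot.
Open Scope R_scope.

Definition phi_m (m s : R) : R := Rpower (Rabs s) (m - 2) * s.

Definition cont_within (D : R -> Prop) (f : R -> R) (x : R) : Prop :=
  filterlim f (within D (locally x)) (locally (f x)).

Definition deriv_within (D : R -> Prop) (f : R -> R) (x l : R) : Prop :=
  filterlim (fun y => (f y - f x) / (y - x))
            (within (fun y => D y /\ y <> x) (locally x)) (locally l).

Definition flux (N : nat) (alpha m gamma : R) (a g v dv : R -> R) (r : R) : R :=
  Rpower r (INR N + alpha - 1) * phi_m m (dv r)
  / Rpower (a r + g (v r)) gamma.

Definition positive_solution (N : nat) (alpha beta m p gamma Rr : R)
    (a g v : R -> R) : Prop :=
  exists dv : R -> R,
    (forall r, 0 <= r < Rr -> 0 < v r) /\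
    (forall r, 0 <= r <= Rr -> cont_within (fun y => 0 <= y <= Rr) v r) /\
    (forall r, 0 <= r < Rr -> deriv_within (fun y => 0 <= y < Rr) v r (dv r)) /\
    (forall r, 0 <= r < Rr -> cont_within (fun y => 0 <= y < Rr) dv r) /\
    (forall r, 0 < r < Rr ->
        ex_derive (flux N alpha m gamma a g v dv) r /\
        continuous (Derive (flux N alpha m gamma a g v dv)) r) /\
    (forall r, 0 < r < Rr ->
        - Derive (flux N alpha m gamma a g v dv) r
        = Rpower r (INR N + beta - 1) * Rpower (v r) p) /\
    dv 0 = 0 /\ v Rr = 0.

(* Near r = 0 a positive solution has v > v(0)/2, so the equation gives
   F' <= -(v(0)/2)^p r^(c-1) for the flux F, with c = N + beta.  Since
   r^(N+alpha-1) -> 0 while |v'| stays bounded and a + g(v) >= c1, the flux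
   has limsup at most 0 at 0, and integrating yields
   F(r) <= -(v(0)/2)^p r^c / c.  Dividing by r^(N+alpha-1) and using
   beta - alpha + 1 <= 0 (weaker than beta - alpha + m <= 0) bounds
   |v'(r)|^(m-1) below by a positive constant for small r, contradicting
   v'(r) -> v'(0) = 0. *)

From Stdlib Require Import Reals Lra.
From Coquelicot Require Import Coquelicot.
Open Scope R_scope.

(* No hypothesis on [x]: [Rpower x y] is [exp (y * ln x)], junk for [x <= 0]. *)
Lemma Rpower_pos x y : 0 < Rpower x y.
Proof. apply exp_pos. Qed.

Lemma Rpower_1_l q : Rpower 1 q = 1.
Proof. unfold Rpower; rewrite ln_1, Rmult_0_r; apply exp_0. Qed.

Lemma Rpower_le_1 x q : 0 < x <= 1 -> 0 <= q -> Rpower x q <= 1.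
Proof. intros Hx Hq; rewrite <- (Rpower_1_l q); apply Rle_Rpower_l; lra. Qed.

Lemma Rpower_ge_1 x q : 0 < x <= 1 -> q <= 0 -> 1 <= Rpower x q.
Proof.
  intros Hx Hq.
  replace q with (- - q) by ring; rewrite Rpower_Ropp.
  assert (Rpower x (- q) <= 1) by (apply Rpower_le_1; lra).
  pose proof (Rpower_pos x (- q)).
  rewrite <- Rinv_1; apply Rinv_le_contravar; lra.
Qed.

Lemma at_right_0_interval (P : R -> Prop) :
  at_right 0 P <-> exists d : posreal, forall x, 0 < x < d -> P x.
Proof.
  split; intros [d Hd]; exists d.
  - intros x Hx; apply Hd; [|lra].
    change (Rabs (x - 0) < d); rewrite Rminus_0_r, Rabs_right; lra.
  - intros x Hx Hx0; apply Hd; split; [exact Hx0|].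
    change (Rabs (x - 0) < d) in Hx; rewrite Rminus_0_r, Rabs_right in Hx; lra.
Qed.

Lemma at_right_0_lt rho : 0 < rho -> at_right 0 (fun x => 0 < x < rho).
Proof.
  intros Hrho; apply at_right_0_interval.
  exists (mkposreal rho Hrho); simpl; intros x Hx; lra.
Qed.

Lemma at_right_Rpower_lt q (eps : posreal) :
  0 < q -> at_right 0 (fun x => Rpower x q < eps).
Proof.
  intros Hq; apply at_right_0_interval.
  exists (mkposreal (Rpower eps (/ q)) (Rpower_pos _ _)); simpl; intros x Hx.
  replace (pos eps) with (Rpower (Rpower eps (/ q)) q).
  - apply Rlt_Rpower_l; lra.
  - rewrite Rpower_mult, Rinv_l by lra; apply Rpower_1, cond_pos.
Qed.

Lemma cont_within_at_right (D : R -> Prop) f x rho :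
  0 < rho -> (forall y, x < y < x + rho -> D y) -> cont_within D f x ->
  forall eps : posreal, at_right x (fun y => Rabs (f y - f x) < eps).
Proof.
  intros Hrho HD Hf eps.
  destruct (Hf _ (locally_ball (f x) eps)) as [d Hd].
  assert (Hdr : 0 < Rmin d rho) by (apply Rmin_pos; [apply cond_pos | lra]).
  exists (mkposreal _ Hdr); simpl; intros y Hy Hxy.
  change (Rabs (y - x) < Rmin d rho) in Hy.
  pose proof (Rmin_l d rho); pose proof (Rmin_r d rho).
  apply Rabs_def2 in Hy.
  apply (Hd y); [change (Rabs (y - x) < d); apply Rabs_def1 |apply HD]; lra.
Qed.

Lemma Rabs_phi_m m s : s <> 0 -> Rabs (phi_m m s) = Rpower (Rabs s) (m - 1).
Proof.
  intros Hs; unfold phi_m.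
  rewrite Rabs_mult, (Rabs_right (Rpower _ _)) by (left; apply Rpower_pos).
  replace (m - 1) with (m - 2 + 1) by ring.
  rewrite Rpower_plus, Rpower_1 by (apply Rabs_pos_lt, Hs); reflexivity.
Qed.

Lemma phi_m_0 m : phi_m m 0 = 0.
Proof. apply Rmult_0_r. Qed.

Lemma phi_m_le_1 m s : 1 <= m -> Rabs s <= 1 -> phi_m m s <= 1.
Proof.
  intros Hm Hs; destruct (Req_dec s 0) as [-> | Hs0]; [rewrite phi_m_0; lra |].
  apply Rle_trans with (1 := Rle_abs _); rewrite Rabs_phi_m by exact Hs0.
  pose proof (Rabs_pos_lt s Hs0); apply Rpower_le_1; lra.
Qed.

Lemma phi_m_le_opp m s K :
  1 < m -> 0 < K -> phi_m m s <= - K -> Rpower K (/ (m - 1)) <= Rabs s.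
Proof.
  intros Hm HK Hphi.
  destruct (Req_dec s 0) as [-> | Hs0]; [rewrite phi_m_0 in Hphi; lra |].
  assert (HKs : K <= Rpower (Rabs s) (m - 1)).
  { rewrite <- Rabs_phi_m by exact Hs0.
    rewrite Rabs_left1 by lra; lra. }
  apply Rle_trans with (Rpower (Rpower (Rabs s) (m - 1)) (/ (m - 1))).
  - apply Rle_Rpower_l; [left; apply Rinv_0_lt_compat |]; lra.
  - rewrite Rpower_mult, Rinv_r, Rpower_1 by (try apply Rabs_pos_lt; lra); lra.
Qed.

Lemma nonincreasing_of_is_derive G dG a b :
  (forall x, a < x < b -> is_derive G x (dG x)) ->
  (forall x, a < x < b -> dG x <= 0) ->
  forall x y, a < x -> x <= y -> y < b -> G y <= G x.
Proof.
  intros HG HdG x y Hx Hxy Hy.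
  destruct (Req_dec x y) as [-> | Hne]; [lra |].
  destruct (MVT_cor2 G dG x y) as [z [Hz Hzxy]]; [lra | |].
  - intros z Hz; apply is_derive_Reals, HG; lra.
  - assert (dG z <= 0) by (apply HdG; lra); nra.
Qed.

(* [F + L/c r^c] is nonincreasing near 0 and has limsup at most 0 at 0. *)
Lemma at_right_le_opp_Rpower F L c :
  0 < c -> 0 <= L ->
  at_right 0 (fun x => ex_derive F x /\ Derive F x <= - (L * Rpower x (c - 1))) ->
  (forall eps : posreal, at_right 0 (fun x => F x < eps)) ->
  at_right 0 (fun r => F r <= - (L / c * Rpower r c)).
Proof.
  intros Hc HL HdF HF0.
  apply at_right_0_interval in HdF as [d Hd]; apply at_right_0_interval.
  exists d; intros r Hr.
  set (k := L / c); assert (Hk : 0 <= k) by (apply Rdiv_le_0_compat; lra).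
  set (G := fun x => F x + k * Rpower x c).
  assert (HG : forall x y, 0 < x -> x <= y -> y < d -> G y <= G x).
  { apply nonincreasing_of_is_derive with
      (dG := fun x => Derive F x + k * (c * Rpower x (c - 1))).
    - intros x Hx; apply (is_derive_plus F (fun x => k * Rpower x c)).
      + apply Derive_correct, Hd, Hx.
      + apply is_derive_scal, is_derive_Reals, derivable_pt_lim_power; lra.
    - intros x Hx; destruct (Hd x Hx) as [_ HdFx]; unfold k.
      replace (L / c * (c * Rpower x (c - 1))) with (L * Rpower x (c - 1))
        by (field; lra); lra. }
  apply Rnot_lt_le; intros Hpos.
  set (t := (F r + k * Rpower r c) / 2).
  assert (Ht : 0 < t) by (unfold t; lra).
  assert (Htk : 0 < t / (k + 1)) by (apply Rdiv_lt_0_compat; lra).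
  destruct (filter_ex (F := at_right 0) _
    (filter_and _ _ (HF0 (mkposreal t Ht))
      (filter_and _ _ (at_right_Rpower_lt c (mkposreal _ Htk) Hc)
                      (at_right_0_lt r ltac:(lra)))))
    as [e [HFe [Hec Her]]]; simpl in *.
  assert (Hket : k * Rpower e c < t).
  { pose proof (Rpower_pos e c).
    apply Rmult_lt_compat_l with (r := k + 1) in Hec; [| lra].
    replace ((k + 1) * (t / (k + 1))) with t in Hec by (field; lra); nra. }
  specialize (HG e r ltac:(lra) ltac:(lra) ltac:(lra)); unfold G, t in *; lra.
Qed.

Section PositiveSolutionNear0.

Variables (N : nat) (alpha beta m p gamma Rr c1 : R) (a g v dv : R -> R).

Hypothesis Hm : 1 < m.
Hypothesis Hp : 0 <= p.
Hypothesis Hgamma : 0 <= gamma.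
Hypothesis Hc : 0 < INR N + beta.
Hypothesis Hexp : beta - alpha + 1 <= 0.
Hypothesis Hc1 : 0 < c1.
Hypothesis Ha : forall t, 0 <= t -> c1 <= a t.
Hypothesis Hg : forall s, 0 <= s -> 0 <= g s.
Hypothesis HR : 0 < Rr.
Hypothesis Hv_pos : forall r, 0 <= r < Rr -> 0 < v r.
Hypothesis Hv_cont0 : cont_within (fun y => 0 <= y <= Rr) v 0.
Hypothesis Hdv_cont0 : cont_within (fun y => 0 <= y < Rr) dv 0.
Hypothesis Hdv0 : dv 0 = 0.

Let F := flux N alpha m gamma a g v dv.

Hypothesis HF : forall r, 0 < r < Rr -> ex_derive F r.
Hypothesis Hequation : forall r, 0 < r < Rr ->
  - Derive F r = Rpower r (INR N + beta - 1) * Rpower (v r) p.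

Let L := Rpower (v 0 / 2) p.

Lemma v_gt_half_near_0 : at_right 0 (fun x => v 0 / 2 < v x).
Proof.
  assert (Hv0 : 0 < v 0 / 2) by (pose proof (Hv_pos 0); lra).
  apply (filter_imp (fun x => Rabs (v x - v 0) < v 0 / 2)).
  - intros x Hx; apply Rabs_def2 in Hx; lra.
  - refine (cont_within_at_right _ v 0 Rr HR _ Hv_cont0 (mkposreal _ Hv0)).
    intros y Hy; lra.
Qed.

Lemma dv_small_near_0 (eps : posreal) : at_right 0 (fun x => Rabs (dv x) < eps).
Proof.
  apply (filter_imp (fun x => Rabs (dv x - dv 0) < eps)).
  - intros x; rewrite Hdv0, Rminus_0_r; auto.
  - refine (cont_within_at_right _ dv 0 Rr HR _ Hdv_cont0 eps).
    intros y Hy; lra.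
Qed.

Lemma flux_denominator_ge x :
  0 < x < Rr -> Rpower c1 gamma <= Rpower (a x + g (v x)) gamma.
Proof.
  intros Hx.
  pose proof (Ha x ltac:(lra)); pose proof (Hg (v x) ltac:(left; apply Hv_pos; lra)).
  apply Rle_Rpower_l; lra.
Qed.

Lemma flux_lt_near_0 (eps : posreal) : at_right 0 (fun x => F x < eps).
Proof.
  set (C := Rpower c1 gamma); assert (HC : 0 < C) by apply Rpower_pos.
  assert (Hq : 0 < INR N + alpha - 1) by lra.
  assert (HeC : 0 < eps * C) by (pose proof (cond_pos eps); nra).
  apply (filter_imp (fun x => 0 < x < Rr /\ Rabs (dv x) < 1 /\
                               Rpower x (INR N + alpha - 1) < eps * C)).
  - intros x [Hx [Hdvx Hxq]]; unfold F, flux.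
    pose proof (phi_m_le_1 m (dv x) ltac:(lra) ltac:(lra)) as Hphi.
    pose proof (flux_denominator_ge x Hx) as HD; fold C in HD.
    set (P := Rpower x (INR N + alpha - 1)) in *.
    set (D := Rpower (a x + g (v x)) gamma) in *.
    assert (HP : 0 < P) by apply Rpower_pos.
    apply Rle_lt_trans with (P / D); [| apply Rle_lt_trans with (P / C)].
    + apply Rmult_le_compat_r; [left; apply Rinv_0_lt_compat |]; nra.
    + apply Rmult_le_compat_l; [| apply Rinv_le_contravar]; lra.
    + apply Rmult_lt_reg_r with C; [exact HC |].
      unfold Rdiv; rewrite Rmult_assoc, Rinv_l; lra.
  - apply filter_and; [apply at_right_0_lt, HR |].
    apply filter_and; [apply (dv_small_near_0 (mkposreal 1 Rlt_0_1)) |].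
    apply (at_right_Rpower_lt _ (mkposreal _ HeC) Hq).
Qed.

Lemma flux_derive_le_near_0 :
  at_right 0 (fun x =>
    ex_derive F x /\ Derive F x <= - (L * Rpower x (INR N + beta - 1))).
Proof.
  apply (filter_imp (fun x => 0 < x < Rr /\ v 0 / 2 < v x)).
  - intros x [Hx Hvx]; split; [exact (HF x Hx) |].
    assert (HL : L <= Rpower (v x) p).
    { pose proof (Hv_pos 0); apply Rle_Rpower_l; lra. }
    pose proof (Hequation x Hx); pose proof (Rpower_pos x (INR N + beta - 1)).
    nra.
  - apply filter_and; [apply at_right_0_lt, HR | apply v_gt_half_near_0].
Qed.

Lemma phi_dv_le_near_0 :
  at_right 0 (fun r =>
    phi_m m (dv r) <= - (L / (INR N + beta) * Rpower c1 gamma)).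
Proof.
  set (c := INR N + beta); set (k := L / c).
  assert (Hk : 0 <= k) by (left; apply Rdiv_lt_0_compat; [apply Rpower_pos | exact Hc]).
  apply (filter_imp (fun r => F r <= - (k * Rpower r c) /\ 0 < r < Rmin Rr 1)).
  - intros r [HFr Hr]; pose proof (Rmin_l Rr 1); pose proof (Rmin_r Rr 1).
    unfold F, flux in HFr.
    replace (Rpower r c) with
      (Rpower r (INR N + alpha - 1) * Rpower r (beta - alpha + 1)) in HFr
      by (rewrite <- Rpower_plus; f_equal; unfold c; ring).
    pose proof (flux_denominator_ge r ltac:(lra)) as HD.
    assert (HE : 1 <= Rpower r (beta - alpha + 1)) by (apply Rpower_ge_1; lra).
    set (P := Rpower r (INR N + alpha - 1)) in *.
    set (E := Rpower r (beta - alpha + 1)) in *.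
    set (D := Rpower (a r + g (v r)) gamma) in *.
    set (C := Rpower c1 gamma) in *.
    assert (HP : 0 < P) by apply Rpower_pos.
    assert (HC : 0 < C) by apply Rpower_pos.
    assert (Hphi : phi_m m (dv r) <= - (k * (E * D))).
    { apply Rmult_le_reg_l with (P / D); [apply Rdiv_lt_0_compat; lra |].
      replace (P / D * phi_m m (dv r)) with (P * phi_m m (dv r) / D) by (field; lra).
      replace (P / D * - (k * (E * D))) with (- (k * (P * E))) by (field; lra).
      exact HFr. }
    assert (k * C <= k * (E * D)) by (apply Rmult_le_compat_l; nra).
    lra.
  - apply filter_and.
    + apply at_right_le_opp_Rpower; [exact Hc | left; apply Rpower_pos | |].
      * exact flux_derive_le_near_0.
      * exact flux_lt_near_0.
    + apply at_right_0_lt, Rmin_pos; lra.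
Qed.

End PositiveSolutionNear0.

Theorem theorem1p3 (N : nat) (Rr m p alpha beta gamma c1 c2 : R)
    (a g : R -> R) :
  (1 <= N)%nat -> 0 < Rr -> 1 < m -> 1 < p ->
  0 < c1 -> c1 <= c2 ->
  (forall t, 0 <= t -> 0 < a t) ->
  (forall t, 0 <= t -> cont_within (fun y => 0 <= y) a t) ->
  (forall t, 0 <= t -> c1 <= a t <= c2) ->
  (forall s, 0 <= s -> 0 <= g s) ->
  (forall s, 0 <= s -> cont_within (fun y => 0 <= y) g s) ->
  0 < gamma -> 0 < INR N + beta -> beta - alpha + m <= 0 ->
  forall v : R -> R, ~ positive_solution N alpha beta m p gamma Rr a g v.
Proof.
  intros _ HR Hm Hp Hc1 _ _ _ Ha Hg _ Hgamma Hc Hexp v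
    [dv [Hv_pos [Hv_cont [_ [Hdv_cont [HF [Heq [Hdv0 _]]]]]]]].
  set (K := Rpower (v 0 / 2) p / (INR N + beta) * Rpower c1 gamma).
  assert (HK : 0 < K).
  { apply Rmult_lt_0_compat; [apply Rdiv_lt_0_compat; [| exact Hc] |];
      apply Rpower_pos. }
  pose proof (Hdv_cont 0 ltac:(lra)) as Hdv_cont0.
  assert (Hphi := phi_dv_le_near_0 N alpha beta m p gamma Rr c1 a g v dv
    Hm ltac:(lra) ltac:(lra) Hc ltac:(lra) Hc1 (fun t Ht => proj1 (Ha t Ht)) Hg
    HR Hv_pos (Hv_cont 0 ltac:(lra)) Hdv_cont0 Hdv0
    (fun r Hr => proj1 (HF r Hr)) Heq).
  assert (Hdv := dv_small_near_0 Rr dv HR Hdv_cont0 Hdv0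
    (mkposreal _ (Rpower_pos K (/ (m - 1))))).
  destruct (filter_ex (F := at_right 0) _ (filter_and _ _ Hphi Hdv))
    as [r [Hphir Hdvr]].
  pose proof (phi_m_le_opp m (dv r) K Hm HK Hphir); simpl in Hdvr; lra.
Qed.
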